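(* Let $q$ be a prime power and $n=2^v$ with $v\ge0$ and $\gcd(q,n)=1$. The following are equivalent: (i) Type-I duadic splittings of $\mathbb{Z}_{2^v}$ exist; (ii) Type-I duadic splittings of $\mathbb{Z}_{2^v}$ given by some $q$-translation exist; (iii) $0<v<2\,\nu_2(q-1)$. If these hold, there is an integer $u$ with $\max\{0,v-\nu_2(q-1)\}\le u<\min\{v,\nu_2(q-1)\}$, and for such $u$, $\tau_{2^u}$ is a $q$-translation of $\mathbb{Z}_{2^v}$ (i.e. $q2^u\equiv2^u\pmod{2^v}$) and Type-I duadic splittings of $\mathbb{Z}_{2^v}$ given by $\tau_{2^u}$ exist.
   Context: $\mathbb{Z}_n=\mathbb{Z}/n\mathbb{Z}$, $\mathbb{Z}_n^*$ its units. $\mu_q:i\mapsto qi\bmod n$; a subset $P\subseteq\mathbb{Z}_n$ is $\mu_q$-invariant if $\mu_q(P)=P$. For $s\in\mathbb{Z}_n^*$, $t\in\mathbb{Z}_n$ with $qt\equiv t\pmod n$: $\rho_{s,t}:i\mapsto s(i+t)\bmod n$, and $\tau_t=\rho_{1,t}$ is a $q$-translation. Type-I duadic splittings of $\mathbb{Z}_n$ given by $\rho_{s,t}$ exist if there is a $\mu_q$-invariant $P$ with $\mathbb{Z}_n=P\cup\rho_{s,t}(P)$ a disjoint union; Type-I duadic splittings of $\mathbb{Z}_n$ exist if this holds for some such $s,t$. $\nu_2$ is the $2$-adic valuation, $\nu_2(0)=\infty$. *)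

(* Z_n is modelled by 'I_n (n >= 1; here n = 2^v >= 1, so
   the case v = 0, i.e. Z_1, is handled correctly, unlike 'Z_n). Maps of Z_n
   are given by nat-valued formulas reduced modulo n. *)
From mathcomp Require Import all_boot.
Set Implicit Arguments. Unset Strict Implicit. Unset Printing Implicit Defensive.

Definition imZ {n : nat} (f : nat -> nat) (P : {set 'I_n}) : {set 'I_n} :=
  [set j : 'I_n | [exists i in P, f (val i) %% n == val j]].

Definition mu (q : nat) : nat -> nat := fun i => q * i.
Definition rho (s t : nat) : nat -> nat := fun i => s * (i + t).

Definition mu_invariant {n : nat} (q : nat) (P : {set 'I_n}) : Prop :=
  imZ (mu q) P = P.

Definition splits_by (n q s t : nat) : Prop :=
  exists P : {set 'I_n}, mu_invariant q P /\
    P :|: imZ (rho s t) P = [set: 'I_n] /\ P :&: imZ (rho s t) P = set0.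

Definition admissible (n q s t : nat) : Prop :=
  s < n /\ coprime s n /\ t < n /\ q * t = t %[mod n].

Definition typeI_exists (n q : nat) : Prop :=
  exists s t, admissible n q s t /\ splits_by n q s t.

(* q-translation: tau_t = rho_{1,t} with q t = t (mod n) *)
Definition q_translation (n q t : nat) : Prop := t < n /\ q * t = t %[mod n].

Definition typeI_exists_translation (n q : nat) : Prop :=
  exists t, q_translation n q t /\ splits_by n q 1 t.

Definition prime_power (q : nat) : Prop :=
  exists p k, prime p /\ 0 < k /\ q = p ^ k.

Definition nu2 (m : nat) : nat := logn 2 m.

(* Write a = ν2(q - 1).  If max(0, v - a) <= u < min(v, a), let P be the set of
   residues mod 2^v whose u-th binary digit is 0: since q = 1 (mod 2^(u+1)),
   multiplication by q preserves that digit, while τ_{2^u} flips it, so P and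
   τ_{2^u}(P) split Z_{2^v}.
   Conversely, in any Type-I splitting ρ = ρ_{s,t} exchanges P and its
   complement while every power of μ_q preserves both, so ρ(x) = q^k x
   (mod 2^v) has no solution.  For v = 0 the point 0 is one; for 2a <= v one
   exists with k = 0 or 1, because qt = t forces ν2(t) >= v - a >= a, and the
   linear congruence (s - q^k) x = -s t (mod 2^v) is solvable as soon as
   ν2(s - q^k) <= ν2(t). *)

From mathcomp Require Import all_boot all_algebra ring zify.
Set Implicit Arguments. Unset Strict Implicit. Unset Printing Implicit Defensive.

Import GRing.Theory.

Definition bit (u x : nat) : bool := odd (x %/ 2 ^ u).

Lemma bit_modX u x : bit u (x %% 2 ^ u.+1) = bit u x.
Proof.
rewrite /bit {2}(divn_eq x (2 ^ u.+1)) expnS mulnA divnMDl ?expn_gt0 //.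
by rewrite oddD oddM andbF.
Qed.

Lemma eqmod_bit u w x y : u < w -> x = y %[mod 2 ^ w] -> bit u x = bit u y.
Proof.
move=> lt_uw eq_xy; rewrite -bit_modX -[in RHS]bit_modX; congr bit.
by apply/eqP; rewrite -(modn_dvdm _ (dvdn_exp2l 2 lt_uw)) eq_xy modn_dvdm ?dvdn_exp2l.
Qed.

Lemma bit_addX u x : bit u (x + 2 ^ u) = ~~ bit u x.
Proof. by rewrite /bit -{1}(mul1n (2 ^ u)) addnC divnMDl ?expn_gt0 // oddD. Qed.

Lemma bit_small u x : x < 2 ^ u -> bit u x = false.
Proof. by move=> lt_x; rewrite /bit divn_small. Qed.

Lemma eqmod_mul_1mod q d x : 0 < q -> d %| q - 1 -> q * x = x %[mod d].
Proof.
move=> q_gt0 dvd_q1; have q_1 : q = 1 %[mod d] by apply/eqP; rewrite eqn_mod_dvd.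
by rewrite -modnMml q_1 modnMml mul1n.
Qed.

Lemma eqn_mod_mul2l c n a b :
  coprime c n -> (c * a == c * b %[mod n]) = (a == b %[mod n]).
Proof.
move=> co_cn; wlog le_ba : a b / b <= a.
  move=> IH; case: (leqP b a) => [|/ltnW] /IH //.
  by rewrite eq_sym [in RHS]eq_sym.
rewrite !eqn_mod_dvd ?leq_mul2l ?le_ba ?orbT //.
by rewrite -mulnBr Gauss_dvdr // coprime_sym.
Qed.

Lemma mu_eqmod c n x y : x = y %[mod n] -> mu c x = mu c y %[mod n].
Proof. by move=> eq_xy; rewrite /mu -modnMmr eq_xy modnMmr. Qed.

Lemma rho_eqmod s t n x y : x = y %[mod n] -> rho s t x = rho s t y %[mod n].
Proof. by move=> eq_xy; rewrite /rho -modnMmr -modnDml eq_xy modnDml modnMmr. Qed.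

Lemma eqn_mod_rho s t n x y :
  coprime s n -> (rho s t x == rho s t y %[mod n]) = (x == y %[mod n]).
Proof. by move=> co_sn; rewrite /rho eqn_mod_mul2l // eqn_modDr. Qed.

Lemma eqmod_expX_fix q t k n : q * t = t %[mod n] -> q ^ k * t = t %[mod n].
Proof.
move=> fix_t; elim: k => [|k IHk]; first by rewrite mul1n.
by rewrite expnS -mulnA -modnMmr IHk modnMmr.
Qed.

Lemma rho_muX q s t k n x :
  q * t = t %[mod n] -> rho s t (mu (q ^ k) x) = mu (q ^ k) (rho s t x) %[mod n].
Proof.
move=> fix_t; rewrite /rho /mu mulnCA [q ^ k * (x + t)]mulnDr.
by rewrite -[in RHS]modnMmr -modnDmr (eqmod_expX_fix k fix_t) modnDmr modnMmr.
Qed.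

Definition inZn n (n_gt0 : 0 < n) (x : nat) : 'I_n := Ordinal (ltn_pmod x n_gt0).

Lemma inZn_eqmod n (n_gt0 : 0 < n) x y : x = y %[mod n] -> inZn n_gt0 x = inZn n_gt0 y.
Proof. by move=> eq_xy; apply: val_inj. Qed.

Lemma inZn_val n (n_gt0 : 0 < n) (i : 'I_n) : inZn n_gt0 i = i.
Proof. by apply: val_inj; rewrite /= modn_small. Qed.

Lemma inZn_mu_inj n (n_gt0 : 0 < n) c :
  coprime c n -> injective (fun i : 'I_n => inZn n_gt0 (mu c i)).
Proof.
move=> co_cn i j /(congr1 val)/eqP /=; rewrite /mu eqn_mod_mul2l // !modn_small //.
by move/eqP/val_inj.
Qed.

Lemma imZE n (n_gt0 : 0 < n) f (P : {set 'I_n}) :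
  imZ f P = [set inZn n_gt0 (f i) | i : 'I_n in P].
Proof.
apply/setP => j; rewrite inE; apply/existsP/imsetP => [[i /andP[Pi /eqP f_i]] | [i Pi ->]].
  by exists i => //; apply: val_inj.
by exists i; rewrite Pi /=.
Qed.

Section Obstruction.

Variables (n q s t : nat) (n_gt0 : 0 < n) (P : {set 'I_n}).
Hypotheses (co_sn : coprime s n) (fix_t : q * t = t %[mod n]).
Hypotheses (P_inv : mu_invariant q P) (P_cover : P :|: imZ (rho s t) P = [set: 'I_n])
  (P_disj : P :&: imZ (rho s t) P = set0).

Local Notation zn := (inZn n_gt0).

Lemma mem_imZ_rho x : (zn x \in imZ (rho s t) P) = [exists i in P, rho s t i == x %[mod n]].
Proof. by rewrite inE. Qed.

Lemma imZ_rho_notin_P x : zn x \in imZ (rho s t) P -> zn x \notin P.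
Proof.
by move=> im_x; apply/negP => Px; move: (in_set0 (zn x)); rewrite -P_disj in_setI Px im_x.
Qed.

Lemma notin_P_imZ_rho x : zn x \notin P -> zn x \in imZ (rho s t) P.
Proof. by move=> nPx; move: (in_setT (zn x)); rewrite -P_cover inE (negbTE nPx). Qed.

Lemma mem_P_muX k x : (zn (mu (q ^ k) x) \in P) = (zn x \in P).
Proof.
have muX_P y : zn y \in P -> zn (mu (q ^ k) y) \in P.
  elim: k => [|k IHk] Py; first by rewrite /mu mul1n.
  rewrite -P_inv inE; apply/existsP; exists (zn (mu (q ^ k) y)).
  by rewrite IHk //= /mu modnMmr mulnA -expnS.
apply/idP/idP; last exact: muX_P.
apply: contraLR => /notin_P_imZ_rho; rewrite mem_imZ_rho => /existsP[i /andP[Pi /eqP rho_i]].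
apply/imZ_rho_notin_P; rewrite mem_imZ_rho; apply/existsP.
exists (zn (mu (q ^ k) i)); rewrite -{1}(inZn_val n_gt0 i) muX_P ?inZn_val //=.
by rewrite (rho_eqmod _ _ (modn_mod _ _)) (rho_muX _ _ _ fix_t) (mu_eqmod _ rho_i).
Qed.

Lemma mem_P_rho x : (zn (rho s t x) \in P) = (zn x \notin P).
Proof.
case Px: (zn x \in P) => /=.
  apply/negbTE/imZ_rho_notin_P; rewrite mem_imZ_rho; apply/existsP; exists (zn x).
  by rewrite Px /= (rho_eqmod _ _ (modn_mod _ _)).
apply/negbNE/negP => /notin_P_imZ_rho; rewrite mem_imZ_rho => /existsP[i /andP[Pi]].
rewrite eqn_mod_rho // => /eqP/(inZn_eqmod n_gt0); rewrite inZn_val => def_i.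
by rewrite -def_i Pi in Px.
Qed.

Lemma rho_neq_muX k x : rho s t x <> mu (q ^ k) x %[mod n].
Proof.
move=> /(inZn_eqmod n_gt0) eq_rho_mu; have := mem_P_rho x.
by rewrite eq_rho_mu mem_P_muX; case: (zn x \in P).
Qed.

End Obstruction.

Local Open Scope ring_scope.

Lemma eqn_mod_dvdz (a b n : nat) : (a == b %[mod n]) = (n%:Z %| a%:Z - b%:Z)%Z.
Proof. by rewrite -eqz_mod_dvd !modz_nat eqz_nat. Qed.

Lemma gcdz_pow2_dvd (c : int) (j v : nat) :
  ~~ ((2 ^ j.+1)%N%:Z %| c)%Z -> (gcdz c (2 ^ v)%N%:Z %| (2 ^ j)%N%:Z)%Z.
Proof.
move=> ndvd_c.
have /(dvdn_pfactor _ _ (isT : prime 2))[i _ def_g] := dvdn_gcdr `|c| (2 ^ v).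
rewrite dvdzE /gcdz /= def_g dvdn_exp2l // leqNgt.
apply: contra ndvd_c => lt_ji; rewrite dvdzE /=.
apply: dvdn_trans _ (dvdn_gcdl `|c| (2 ^ v)).
by rewrite def_g dvdn_exp2l.
Qed.

Lemma linear_congruence_solvable (c b : int) (n : nat) :
  (0 < n)%N -> (gcdz c n %| b)%Z -> exists x : nat, (n%:Z %| c * x%:Z + b)%Z.
Proof.
move=> n_gt0 /dvdzP[m def_b]; have [u [w Bezout]] := Bezoutz c n.
set y := - (m * u); set k := (y %/ n%:Z)%Z.
have def_y : (y %% n%:Z)%Z = y - k * n%:Z by rewrite {2}(divz_eq y n%:Z) addrAC subrr add0r.
exists `|(y %% n%:Z)%Z|%N; rewrite gez0_abs ?modz_ge0 ?eqz_nat -?lt0n //.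
rewrite def_y def_b -Bezout (_ : _ + _ = n%:Z * (m * w - c * k)); last by rewrite /y; ring.
exact: dvdz_mulr (dvdzz _).
Qed.

Lemma rho_eq_mu_mod_pow2 (s r t v j : nat) :
  ~~ ((2 ^ j.+1)%N%:Z %| s%:Z - r%:Z)%Z -> (2 ^ j %| t)%N ->
  exists x, (rho s t x = mu r x %[mod 2 ^ v])%N.
Proof.
move=> ndvd_sr dvd_t.
have [|x dvd_x] := @linear_congruence_solvable (s%:Z - r%:Z) (s * t)%N (2 ^ v) (expn_gt0 _ _).
  apply: dvdz_trans (gcdz_pow2_dvd v ndvd_sr) _.
  by rewrite dvdzE /= dvdn_mull.
exists x; apply/eqP; rewrite eqn_mod_dvdz /rho /mu.
by rewrite (_ : _ - _ = (s%:Z - r%:Z) * x%:Z + (s * t)%N%:Z) // !PoszM PoszD; ring.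
Qed.

Local Close Scope ring_scope.

Lemma rho_eq_muX_mod_pow2 q s t v :
  1 < q -> 2 * nu2 (q - 1) <= v -> q * t = t %[mod 2 ^ v] ->
  exists x k, rho s t x = mu (q ^ k) x %[mod 2 ^ v].
Proof.
move=> q_gt1 le_v fix_t; set a := nu2 (q - 1) in le_v.
have [-> | t_gt0] := posnP t; first by exists 0, 0; rewrite /rho /mu !muln0.
have q1_gt0 : 0 < q - 1 by rewrite subn_gt0.
set d := logn 2 t; have dvd_t : 2 ^ d %| t := pfactor_dvdnn 2 t.
have le_ad : a <= d.
  have le_t : t <= q * t by rewrite leq_pmull // ltnW.
  have : 2 ^ v %| (q - 1) * t by rewrite mulnBl mul1n -eqn_mod_dvd // fix_t.
  rewrite pfactor_dvdn ?muln_gt0 ?q1_gt0 // lognM //.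
  by rewrite /a /nu2 in le_v *; lia.
have ndvd_q1 : ~~ (2 ^ a.+1 %| q - 1) by rewrite pfactor_dvdn // ltnn.
(* If 2^(d+1) divides s - 1, then s - q has the same 2-adic valuation a as q - 1. *)
have [dvd_s1 | ndvd_s1] := boolP ((2 ^ d.+1)%:Z %| s%:Z - 1)%Z%R; last first.
  by have [x eq_x] := rho_eq_mu_mod_pow2 v ndvd_s1 dvd_t; exists x, 0; rewrite expn0.
have ndvd_sq : ~~ ((2 ^ a.+1)%:Z %| s%:Z - q%:Z)%Z%R.
  apply: contra ndvd_q1 => dvd_sq.
  have dvd2a_s1 : ((2 ^ a.+1)%:Z %| s%:Z - 1)%Z%R.
    by apply: dvdz_trans dvd_s1; rewrite dvdzE /= dvdn_exp2l.
  have := rpredB dvd2a_s1 dvd_sq; rewrite (_ : _ - _ = (q - 1)%N%:Z)%R.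
    by rewrite dvdzE.
  by rewrite -subzn 1?ltnW //; ring.
have [x eq_x] := rho_eq_mu_mod_pow2 v ndvd_sq (dvdn_trans (dvdn_exp2l 2 le_ad) dvd_t).
by exists x, 1; rewrite expn1.
Qed.

Lemma splits_by_pow2_bound q v s t :
  1 < q -> coprime s (2 ^ v) -> q * t = t %[mod 2 ^ v] -> splits_by (2 ^ v) q s t ->
  0 < v /\ v < 2 * nu2 (q - 1).
Proof.
move=> q_gt1 co_s fix_t [P [P_inv [P_cover P_disj]]].
have no_fix := rho_neq_muX (expn_gt0 2 v) co_s fix_t P_inv P_cover P_disj.
split.
  by rewrite lt0n; apply/eqP => v0; apply: (no_fix 0 0); rewrite v0 !modn1.
rewrite ltnNge; apply/negP => le_v.
by have [x [k]] := rho_eq_muX_mod_pow2 s q_gt1 le_v fix_t; apply: no_fix.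
Qed.

Lemma q_translation_pow2 q v u :
  0 < q -> v - nu2 (q - 1) <= u -> u < v -> q_translation (2 ^ v) q (2 ^ u).
Proof.
move=> q_gt0 le_u lt_uv; split; first by rewrite ltn_exp2l.
apply/eqP; rewrite eqn_mod_dvd ?leq_pmull // -{2}(mul1n (2 ^ u)) -mulnBl.
rewrite -(subnK (ltnW lt_uv)) expnD dvdn_pmul2r ?expn_gt0 //.
apply: dvdn_trans (pfactor_dvdnn 2 (q - 1)); rewrite dvdn_exp2l //.
by rewrite leq_subLR addnC -leq_subLR.
Qed.

Section TranslationSplitting.

Variables (q v u : nat).
Hypotheses (q_gt0 : 0 < q) (lt_uv : u < v) (lt_ua : u < nu2 (q - 1)).

Let n_gt0 : 0 < 2 ^ v := expn_gt0 2 v.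
Local Notation zn := (inZn n_gt0).

Let dvd_q1 : 2 ^ u.+1 %| q - 1.
Proof. by apply: dvdn_trans (pfactor_dvdnn 2 (q - 1)); rewrite dvdn_exp2l. Qed.

Let bit_mu x : bit u (mu q x %% 2 ^ v) = bit u x.
Proof.
rewrite (eqmod_bit lt_uv (modn_mod _ _)).
exact: eqmod_bit (ltnSn u) (eqmod_mul_1mod _ q_gt0 dvd_q1).
Qed.

Let co_q : coprime q (2 ^ v).
Proof.
have two_dvd_q1 : 2 %| q - 1.
  by apply: dvdn_trans dvd_q1; rewrite -{1}(expn1 2) dvdn_exp2l.
by rewrite coprimeXr // coprimen2 -(subnK q_gt0) addn1 /= -dvdn2.
Qed.

Let P := [set i : 'I_(2 ^ v) | ~~ bit u i].

Let P_inv : mu_invariant q P.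
Proof.
have sub_P : imZ (mu q) P \subset P.
  rewrite imZE; apply/subsetP => _ /imsetP[i Pi ->].
  by rewrite inE in Pi; rewrite inE /= bit_mu.
apply/eqP; rewrite eqEcard sub_P imZE card_imset ?leqnn //.
exact: inZn_mu_inj.
Qed.

Let P_cover : P :|: imZ (rho 1 (2 ^ u)) P = [set: 'I_(2 ^ v)].
Proof.
apply/setP => j; rewrite !inE; case Pj: (~~ bit u j) => //=.
move/negbFE: Pj => bit_j.
have le_j : 2 ^ u <= j by rewrite leqNgt; apply: contraL bit_j => /bit_small ->.
have lt_j : j - 2 ^ u < 2 ^ v by apply: leq_ltn_trans (leq_subr _ _) _.
apply/existsP; exists (zn (j - 2 ^ u)).
rewrite inE /= /rho mul1n !modn_small ?subnK // eqxx andbT.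
by move: bit_j; rewrite -{1}(subnK le_j) bit_addX.
Qed.

Let P_disj : P :&: imZ (rho 1 (2 ^ u)) P = set0.
Proof.
apply/setP => j; rewrite !inE; apply/negbTE/andP => -[Pj /existsP[i /andP[Pi /eqP def_j]]].
rewrite inE in Pi.
by rewrite -def_j /rho mul1n (eqmod_bit lt_uv (modn_mod _ _)) bit_addX Pi in Pj.
Qed.

Lemma splits_by_translation_pow2 : splits_by (2 ^ v) q 1 (2 ^ u).
Proof. by exists P. Qed.

End TranslationSplitting.

Lemma translation_pow2 q v u :
  0 < q -> v - nu2 (q - 1) <= u -> u < minn v (nu2 (q - 1)) ->
  q_translation (2 ^ v) q (2 ^ u) /\ splits_by (2 ^ v) q 1 (2 ^ u).
Proof.
move=> q_gt0 le_u; rewrite leq_min => /andP[lt_uv lt_ua].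
by split; [exact: q_translation_pow2 | exact: splits_by_translation_pow2].
Qed.

Lemma typeI_exists_translation_typeI n q :
  1 < n -> typeI_exists_translation n q -> typeI_exists n q.
Proof.
move=> n_gt1 [t [[lt_tn fix_t] split_t]]; exists 1, t.
by split=> //; split; [|split; [exact: coprime1n | split]].
Qed.

Theorem theorem3p8 (q v : nat) :
  prime_power q -> coprime q (2 ^ v) ->
  (typeI_exists (2 ^ v) q <-> typeI_exists_translation (2 ^ v) q) /\
  (typeI_exists_translation (2 ^ v) q <-> (0 < v /\ v < 2 * nu2 (q - 1))) /\
  (typeI_exists (2 ^ v) q ->
     (exists u, v - nu2 (q - 1) <= u /\ u < minn v (nu2 (q - 1))) /\
     (forall u, v - nu2 (q - 1) <= u -> u < minn v (nu2 (q - 1)) ->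
        q * 2 ^ u = 2 ^ u %[mod 2 ^ v] /\
        q_translation (2 ^ v) q (2 ^ u) /\
        splits_by (2 ^ v) q 1 (2 ^ u))).
Proof.
move=> q_prime_power _.
have q_gt1 : 1 < q.
  case: q_prime_power => p [k [p_prime [k_gt0 ->]]].
  by rewrite -(exp1n k) ltn_exp2r // prime_gt1.
set a := nu2 (q - 1).
have typeI_range : typeI_exists (2 ^ v) q -> 0 < v /\ v < 2 * a.
  by case=> s [t [[_ [co_s [_ fix_t]]] split_st]]; exact: splits_by_pow2_bound split_st.
have translation_range : typeI_exists_translation (2 ^ v) q -> 0 < v /\ v < 2 * a.
  by case=> t [[_ fix_t] split_t]; exact: splits_by_pow2_bound (coprime1n _) fix_t split_t.
have range_u : 0 < v /\ v < 2 * a -> exists u, v - a <= u /\ u < minn v a.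
  by case=> v_gt0 lt_v; exists (v - a); rewrite leq_min; split=> //; apply/andP; lia.
have range_translation : 0 < v /\ v < 2 * a -> typeI_exists_translation (2 ^ v) q.
  move/range_u=> [u [le_u lt_u]]; exists (2 ^ u).
  exact: translation_pow2 (ltnW q_gt1) le_u lt_u.
have translation_typeI : typeI_exists_translation (2 ^ v) q -> typeI_exists (2 ^ v) q.
  move=> ex_t; have [v_gt0 _] := translation_range ex_t.
  by apply: typeI_exists_translation_typeI ex_t; rewrite -{1}(expn0 2) ltn_exp2l.
split; first by split=> [/typeI_range/range_translation | /translation_typeI].
split; first by split; [exact: translation_range | exact: range_translation].
move=> /typeI_range/range_u ex_u; split=> // u le_u lt_u.
by have [[lt_un fix_u] split_u] := translation_pow2 (ltnW q_gt1) le_u lt_u.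
Qed.
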